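(* Suppose that all conditions listed in the context hold (without requiring $M_{24}<0$), where $R_4$ is chosen as $R_4=\mathbf{0}$. If $L_1=\Gamma_{11}^{-1}X_1^{-1}R_2$, $L_2=P_1^{-1}R_1+ET_{14}^{-1}T_{13}L_1$, $K_1=R_3P_2^{-1}$, then the feedback controller $u=K_1\hat x$ with the observer renders the closed-loop system ISS w.r.t. $w$.
   Context: System: $\dot x=Ax+Bu+Ep(q)+E_ww$, $y=Cx+Du+F_ww$, $q=C_qx$, $p:\mathbb{R}^{n_q}\to\mathbb{R}^{n_p}$, $p(\mathbf{0})=\mathbf{0}$; a symmetric $M$ is a $\delta$-MM for $p$ if $\begin{pmatrix}\delta q\\ \delta p\end{pmatrix}^\top M\begin{pmatrix}\delta q\\ \delta p\end{pmatrix}\geq0$ for all $q_1,q_2$, $\delta q=q_2-q_1$, $\delta p=p(q_2)-p(q_1)$. Observer: $\dot{\hat x}=A\hat x+Bu+Ep(\hat q+L_1(\hat y-y))+L_2(\hat y-y)$, $\hat y=C\hat x+Du$, $\hat q=C_q\hat x$. Conditions: (i) there exist a set $\mathcal{N}_1$ of symmetric pairs $(X_1,Y_1)$ ($X_1\in\mathbb{R}^{n_q\times n_q}$, $Y_1\in\mathbb{R}^{n_p\times n_p}$) and an invertible $T_1=\begin{pmatrix}T_{11}&T_{12}\\ T_{13}&T_{14}\end{pmatrix}$, $T_{14}$ invertible, with $T_1^\top\begin{pmatrix}X_1&\mathbf{0}\\ \mathbf{0}&-Y_1\end{pmatrix}T_1$ a $\delta$-MM of $p$ for all $(X_1,Y_1)\in\mathcal{N}_1$;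 (ii) there exist a set $\mathcal{N}_2$ of symmetric invertible pairs $(X_2,Y_2)$ and an invertible $T_2=\begin{pmatrix}T_{21}&T_{22}\\ T_{23}&T_{24}\end{pmatrix}$, $T_{24}$ invertible, with $T_2^\top\begin{pmatrix}X_2^{-1}&\mathbf{0}\\ \mathbf{0}&-Y_2^{-1}\end{pmatrix}T_2$ a $\delta$-MM of $p$ for all $(X_2,Y_2)\in\mathcal{N}_2$; (iii) there exist $\alpha_1,\alpha_2,\mu_1,\mu_2>0$, matrices $R_1,R_2,R_3,R_4$, $P_1=P_1^\top>0$, $P_2=P_2^\top>0$, $X_1=X_1^\top>0$, $Y_1=Y_1^\top$, $X_2=X_2^\top>0$, $Y_2=Y_2^\top>0$, $(X_i,Y_i)\in\mathcal{N}_i$, such that $\begin{pmatrix}\Phi-\varphi^\top Y_1\varphi & \phi^\top\\ \phi & -X_1\end{pmatrix}\leq0$ and $\begin{pmatrix}\Psi-\varphi^\top Y_2\varphi & \psi^\top\\ \psi & -X_2\end{pmatrix}\leq0$, with $\Phi=\begin{pmatrix}\Phi_0&-P_1\tilde E_1&P_1E_w+R_1F_w\\ *&\mathbf{0}&\mathbf{0}\\ *&*&-\mu_1I\end{pmatrix}$, $\Phi_0=\tilde A_1^\top P_1+P_1\tilde A_1+C^\top R_1^\top+R_1C+\alpha_1P_1$, $\Psi=\begin{pmatrix}\Psi_0&\tilde E_2Y_2+BR_4&E_w\\ *&\mathbf{0}&\mathbf{0}\\ *&*&-\mu_2I\end{pmatrix}$, $\Psi_0=\tilde A_2P_2+P_2\tilde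 A_2^\top+BR_3+R_3^\top B^\top+\alpha_2P_2$, $\phi=(-(X_1\Gamma_{11}C_q+R_2C),X_1\Gamma_{12},-R_2F_w)$, $\varphi=(\mathbf{0}_{n_p\times n_x},I_{n_p},\mathbf{0}_{n_p\times n_w})$, $\psi=(\Gamma_{21}C_qP_2,\Gamma_{22}Y_2,\mathbf{0}_{n_q\times n_w})$, $\tilde A_i=A-ET_{i4}^{-1}T_{i3}C_q$, $\tilde E_i=ET_{i4}^{-1}$, $\Gamma_{i1}=T_{i1}-T_{i2}T_{i4}^{-1}T_{i3}$, $\Gamma_{i2}=T_{i2}T_{i4}^{-1}$. Here $M_{24}$ denotes the lower-right $n_p\times n_p$ block of the multiplier in (ii). ISS w.r.t. $w$ means there exist $\beta\in\mathcal{KL}$, $\gamma\in\mathcal{K}$ with $\|(x,x-\hat x)(t)\|\leq\beta(\|(x,x-\hat x)(0)\|,t)+\gamma(\|w\|_\infty)$. *)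

From HB Require Import structures.
From mathcomp Require Import all_boot all_order all_algebra.
From mathcomp Require Import all_classical all_reals all_analysis.
Set Implicit Arguments. Unset Strict Implicit. Unset Printing Implicit Defensive.
Import Order.TTheory GRing.Theory Num.Theory.
Import numFieldNormedType.Exports.
Local Open Scope classical_set_scope.
Local Open Scope ring_scope.

Section Defs.
Variable R : realType.

Definition qform n (M : 'M[R]_n) (v : 'cV[R]_n) : R := (v^T *m M *m v) 0 0.

Definition posdef n (M : 'M[R]_n) := M^T = M /\ forall v, v != 0 -> 0 < qform M v.
Definition negsemidef n (M : 'M[R]_n) := forall v, qform M v <= 0.

Definition delta_MM nq np (p : 'cV[R]_nq -> 'cV[R]_np) (M : 'M[R]_(nq + np)) :=
  M^T = M /\
  forall q1 q2 : 'cV[R]_nq, 0 <= qform M (col_mx (q2 - q1) (p q2 - p q1)).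

Definition Tb1 nq np (T : 'M[R]_(nq + np)) : 'M[R]_(nq, nq) := ulsubmx T.
Definition Tb2 nq np (T : 'M[R]_(nq + np)) : 'M[R]_(nq, np) := ursubmx T.
Definition Tb3 nq np (T : 'M[R]_(nq + np)) : 'M[R]_(np, nq) := dlsubmx T.
Definition Tb4 nq np (T : 'M[R]_(nq + np)) : 'M[R]_(np, np) := drsubmx T.

Definition Atil nx nq np (A : 'M[R]_nx) (E : 'M[R]_(nx, np)) (Cq : 'M[R]_(nq, nx))
  (T : 'M[R]_(nq + np)) : 'M[R]_nx := A - E *m invmx (Tb4 T) *m Tb3 T *m Cq.
Definition Etil nx nq np (E : 'M[R]_(nx, np)) (T : 'M[R]_(nq + np)) : 'M[R]_(nx, np) :=
  E *m invmx (Tb4 T).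
Definition Gam1 nq np (T : 'M[R]_(nq + np)) : 'M[R]_nq :=
  Tb1 T - Tb2 T *m invmx (Tb4 T) *m Tb3 T.
Definition Gam2 nq np (T : 'M[R]_(nq + np)) : 'M[R]_(nq, np) :=
  Tb2 T *m invmx (Tb4 T).

(* symmetric 3x3 block matrix ( a b c ; * d e ; * * f ) *)
Definition sym3 n1 n2 n3 (a : 'M[R]_n1) (b : 'M[R]_(n1, n2)) (c : 'M[R]_(n1, n3))
  (d : 'M[R]_n2) (e : 'M[R]_(n2, n3)) (f : 'M[R]_n3) : 'M[R]_(n1 + n2 + n3) :=
  block_mx (block_mx a b b^T d) (col_mx c e) (row_mx c^T e^T) f.

Definition varphi nx np nw : 'M[R]_(np, nx + np + nw) :=
  row_mx (row_mx 0 1%:M) 0.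

Definition LMI1 nx ny nw nq np (A : 'M[R]_nx) (C : 'M[R]_(ny, nx)) (E : 'M[R]_(nx, np))
  (Ew : 'M[R]_(nx, nw)) (Fw : 'M[R]_(ny, nw)) (Cq : 'M[R]_(nq, nx))
  (T1 : 'M[R]_(nq + np)) (alpha1 mu1 : R) (P1 : 'M[R]_nx) (R1 : 'M[R]_(nx, ny))
  (R2 : 'M[R]_(nq, ny)) (X1 : 'M[R]_nq) (Y1 : 'M[R]_np) : 'M[R]_(nx + np + nw + nq) :=
  let At := Atil A E Cq T1 in
  let Phi0 := At^T *m P1 + P1 *m At + C^T *m R1^T + R1 *m C + alpha1 *: P1 in
  let Phi := sym3 Phi0 (- (P1 *m Etil E T1)) (P1 *m Ew + R1 *m Fw) 0 0 (- (mu1 *: 1%:M)) in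
  let phi : 'M[R]_(nq, nx + np + nw) :=
    row_mx (row_mx (- (X1 *m Gam1 T1 *m Cq + R2 *m C)) (X1 *m Gam2 T1)) (- (R2 *m Fw)) in
  let vp := varphi nx np nw in
  block_mx (Phi - vp^T *m Y1 *m vp) phi^T phi (- X1).

Definition LMI2 nx nu nw nq np (A : 'M[R]_nx) (B : 'M[R]_(nx, nu)) (E : 'M[R]_(nx, np))
  (Ew : 'M[R]_(nx, nw)) (Cq : 'M[R]_(nq, nx))
  (T2 : 'M[R]_(nq + np)) (alpha2 mu2 : R) (P2 : 'M[R]_nx) (R3 : 'M[R]_(nu, nx))
  (R4 : 'M[R]_(nu, np)) (X2 : 'M[R]_nq) (Y2 : 'M[R]_np) : 'M[R]_(nx + np + nw + nq) :=
  let At := Atil A E Cq T2 in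
  let Psi0 := At *m P2 + P2 *m At^T + B *m R3 + R3^T *m B^T + alpha2 *: P2 in
  let Psi := sym3 Psi0 (Etil E T2 *m Y2 + B *m R4) Ew 0 0 (- (mu2 *: 1%:M)) in
  let psi : 'M[R]_(nq, nx + np + nw) :=
    row_mx (row_mx (Gam1 T2 *m Cq *m P2) (Gam2 T2 *m Y2)) 0 in
  let vp := varphi nx np nw in
  block_mx (Psi - vp^T *m Y2 *m vp) psi^T psi (- X2).

Definition closed_loop_solution nx nu ny nw nq np
  (A : 'M[R]_nx) (B : 'M[R]_(nx, nu)) (E : 'M[R]_(nx, np)) (Ew : 'M[R]_(nx, nw))
  (C : 'M[R]_(ny, nx)) (D : 'M[R]_(ny, nu)) (Fw : 'M[R]_(ny, nw)) (Cq : 'M[R]_(nq, nx))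
  (p : 'cV[R]_nq -> 'cV[R]_np)
  (L1 : 'M[R]_(nq, ny)) (L2 : 'M[R]_(nx, ny)) (K1 : 'M[R]_(nu, nx))
  (w : R -> 'cV[R]_nw) (x xh : R -> 'cV[R]_nx) :=
  {within `[0, +oo[, continuous x} /\ {within `[0, +oo[, continuous xh} /\
  forall t : R, 0 < t ->
    let u := K1 *m xh t in
    let y := C *m x t + D *m u + Fw *m w t in
    let yh := C *m xh t + D *m u in
    let q := Cq *m x t in
    let qh := Cq *m xh t in
    is_derive t 1 x (A *m x t + B *m u + E *m p q + Ew *m w t) /\
    is_derive t 1 xh (A *m xh t + B *m u + E *m p (qh + L1 *m (yh - y)) + L2 *m (yh - y)).

Definition classK (g : R -> R) :=
  g 0 = 0 /\ {within `[0, +oo[, continuous g} /\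
  (forall a b, 0 <= a -> a < b -> g a < g b).

Definition classKL (b : R -> R -> R) :=
  (forall t, 0 <= t -> classK (fun s => b s t)) /\
  (forall s, 0 <= s ->
     (forall t1 t2, 0 <= t1 -> t1 <= t2 -> b s t2 <= b s t1) /\
     (b s t @[t --> +oo] --> 0)).

(* essential-sup norm of the input on [0, +oo) (here: sup norm) *)
Definition sup_norm n (w : R -> 'cV[R]_n) : R :=
  sup [set `|w t| | t in `[0, +oo[%classic].

Definition bounded_input n (w : R -> 'cV[R]_n) :=
  exists M : R, forall t, 0 <= t -> `|w t| <= M.

Definition closed_loop_ISS nx nu ny nw nq np
  (A : 'M[R]_nx) (B : 'M[R]_(nx, nu)) (E : 'M[R]_(nx, np)) (Ew : 'M[R]_(nx, nw))
  (C : 'M[R]_(ny, nx)) (D : 'M[R]_(ny, nu)) (Fw : 'M[R]_(ny, nw)) (Cq : 'M[R]_(nq, nx))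
  (p : 'cV[R]_nq -> 'cV[R]_np)
  (L1 : 'M[R]_(nq, ny)) (L2 : 'M[R]_(nx, ny)) (K1 : 'M[R]_(nu, nx)) :=
  exists (beta : R -> R -> R) (gamma : R -> R), classKL beta /\ classK gamma /\
  forall (w : R -> 'cV[R]_nw) (x xh : R -> 'cV[R]_nx),
    bounded_input w ->
    closed_loop_solution A B E Ew C D Fw Cq p L1 L2 K1 w x xh ->
    forall t, 0 <= t ->
      `|col_mx (x t) (x t - xh t)| <=
        beta `|col_mx (x 0) (x 0 - xh 0)| t + gamma (sup_norm w).

End Defs.

(* Both LMIs are quadratic forms; evaluated at the right vectors and combined with the
   delta-multiplier inequality for the loop-transformed nonlinearity increment, they give
   dissipation inequalities: d/dt (e' P1 e) <= - alpha1 e' P1 e + mu1 |w|^2 for the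
   observer error e = x - xh, and the same for x' P2^-1 x up to a cross term in B K1 e.
   Young's inequality bounds the cross term by e' P1 e, so V = x' P2^-1 x + kap e' P1 e,
   with kap large, satisfies dV/dt <= - c V + b |w|^2.  Integrating this and comparing V
   with the squared norm of (x, e) gives the ISS bound with beta(s, t) = k1 s exp (- c t / 2)
   and gamma(r) = k2 r. *)

From HB Require Import structures.
From mathcomp Require Import all_boot all_order all_algebra.
From mathcomp Require Import all_classical all_reals all_analysis.
From mathcomp Require Import ring lra.
Set Implicit Arguments. Unset Strict Implicit. Unset Printing Implicit Defensive.
Import Order.TTheory GRing.Theory Num.Theory.
Import numFieldNormedType.Exports.
Local Open Scope classical_set_scope.
Local Open Scope ring_scope.

Section DotProduct.
Variable R : comPzRingType.

Definition dot n (u v : 'cV[R]_n) : R := (u^T *m v) 0 0.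

Lemma dotE n (u v : 'cV[R]_n) : dot u v = \sum_i u i 0 * v i 0.
Proof. by rewrite /dot !mxE; apply: eq_bigr => i _; rewrite mxE. Qed.

Lemma dotC n (u v : 'cV[R]_n) : dot u v = dot v u.
Proof. by rewrite !dotE; apply: eq_bigr => i _; exact: mulrC. Qed.

Lemma dotDl n (u1 u2 v : 'cV[R]_n) : dot (u1 + u2) v = dot u1 v + dot u2 v.
Proof. by rewrite !dotE -big_split; apply: eq_bigr => i _; rewrite mxE mulrDl. Qed.

Lemma dotDr n (u v1 v2 : 'cV[R]_n) : dot u (v1 + v2) = dot u v1 + dot u v2.
Proof. by rewrite dotC dotDl !(dotC u). Qed.

Lemma dotZl n k (u v : 'cV[R]_n) : dot (k *: u) v = k * dot u v.
Proof. by rewrite !dotE mulr_sumr; apply: eq_bigr => i _; rewrite mxE mulrA. Qed.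

Lemma dotZr n k (u v : 'cV[R]_n) : dot u (k *: v) = k * dot u v.
Proof. by rewrite dotC dotZl dotC. Qed.

Lemma dotNl n (u v : 'cV[R]_n) : dot (- u) v = - dot u v.
Proof. by rewrite -scaleN1r dotZl mulN1r. Qed.

Lemma dotNr n (u v : 'cV[R]_n) : dot u (- v) = - dot u v.
Proof. by rewrite dotC dotNl dotC. Qed.

Lemma dot0r n (u : 'cV[R]_n) : dot u 0 = 0.
Proof. by rewrite -(scale0r 0) dotZr mul0r. Qed.

Lemma dot_trmx n m (u : 'cV[R]_n) (M : 'M[R]_(m, n)) (v : 'cV[R]_m) :
  dot u (M^T *m v) = dot v (M *m u).
Proof. by rewrite dotC /dot trmx_mul trmxK mulmxA. Qed.

Lemma dot_col n1 n2 (u1 v1 : 'cV[R]_n1) (u2 v2 : 'cV[R]_n2) :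
  dot (col_mx u1 u2) (col_mx v1 v2) = dot u1 v1 + dot u2 v2.
Proof. by rewrite /dot tr_col_mx mul_row_col mxE. Qed.

End DotProduct.

Section QuadraticForm.
Variable R : realType.

Lemma qformE n (M : 'M[R]_n) v : qform M v = dot v (M *m v).
Proof. by rewrite /qform /dot mulmxA. Qed.

Lemma qform_sum n (M : 'M[R]_n) v :
  qform M v = \sum_i \sum_j M i j * (v i 0 * v j 0).
Proof.
rewrite qformE dotE; apply: eq_bigr => i _; rewrite mxE mulr_sumr.
by apply: eq_bigr => j _; rewrite mulrCA.
Qed.

Lemma qformD n (M N : 'M[R]_n) v : qform (M + N) v = qform M v + qform N v.
Proof. by rewrite !qformE mulmxDl dotDr. Qed.

Lemma qformN n (M : 'M[R]_n) v : qform (- M) v = - qform M v.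
Proof. by rewrite !qformE mulNmx dotNr. Qed.

Lemma qformZ n k (M : 'M[R]_n) v : qform (k *: M) v = k * qform M v.
Proof. by rewrite !qformE -scalemxAl dotZr. Qed.

Lemma qform_trmx n (M : 'M[R]_n) v : qform M^T v = qform M v.
Proof. by rewrite !qformE dot_trmx. Qed.

Lemma qform_scalev n (M : 'M[R]_n) k v : qform M (k *: v) = k ^+ 2 * qform M v.
Proof. by rewrite !qformE -scalemxAr dotZl dotZr mulrA expr2. Qed.

Lemma qform_oppv n (M : 'M[R]_n) v : qform M (- v) = qform M v.
Proof. by rewrite -scaleN1r qform_scalev sqrrN expr1n mul1r. Qed.

Lemma qform0 n (M : 'M[R]_n) : qform M 0 = 0.
Proof. by rewrite -(scale0r 0) qform_scalev expr0n mul0r. Qed.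

Lemma qform_mulmx n m (Q : 'M[R]_n) (M : 'M[R]_(n, m)) v :
  qform Q (M *m v) = qform (M^T *m Q *m M) v.
Proof. by rewrite !qformE -!mulmxA dot_trmx dotC. Qed.

Lemma qform_block_sym n1 n2 (a : 'M[R]_n1) (b : 'M[R]_(n1, n2)) (d : 'M[R]_n2) u v :
  qform (block_mx a b b^T d) (col_mx u v) = qform a u + 2 * dot u (b *m v) + qform d v.
Proof. by rewrite !qformE mul_block_col dot_col !dotDr dot_trmx; ring. Qed.

Lemma qform_block_diag n1 n2 (a : 'M[R]_n1) (d : 'M[R]_n2) u v :
  qform (block_mx a 0 0 d) (col_mx u v) = qform a u + qform d v.
Proof.
have -> : block_mx a 0 0 d = block_mx a 0 0^T d by rewrite trmx0.
by rewrite qform_block_sym mul0mx dot0r mulr0 addr0.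
Qed.

Lemma qform_comp_continuous (T : topologicalType) n (M : 'M[R]_n) (c : T -> 'cV[R]_n) :
  (forall i, continuous (fun t => c t i 0)) -> continuous (fun t => qform M (c t)).
Proof.
move=> cc t.
have -> : (fun t => qform M (c t)) =
    \sum_i \sum_j (cst (M i j) * ((fun t => c t i 0) * (fun t => c t j 0))).
  apply: funext => s; rewrite qform_sum fct_sumE.
  by apply: eq_bigr => i _; rewrite fct_sumE.
apply: (big_ind (fun f : T -> R => {for t, continuous f})) => [|f g|i _].
- exact: cvg_cst.
- exact: cvgD.
apply: (big_ind (fun f : T -> R => {for t, continuous f})) => [|f g|j _].
- exact: cvg_cst.
- exact: cvgD.
by apply: cvgM; [exact: cvg_cst | apply: cvgM; [exact: cc | exact: cc]].
Qed.

Lemma qform_continuous n (M : 'M[R]_n) : continuous (qform M).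
Proof. by apply: qform_comp_continuous => i; exact: coord_continuous. Qed.

Lemma is_derive_coord m n (x : R -> 'M[R]_(m, n)) (t : R) dx i j :
  is_derive t 1 x dx -> is_derive t 1 (fun s => x s i j) (dx i j).
Proof.
move=> [dv dval].
have cv : (fun h : R => h^-1 *: ((x \o shift t) (h *: 1) - x t)) @ 0^' --> dx.
  by rewrite -dval; exact: dv.
have cc : (fun h : R => h^-1 *: (((fun s => x s i j) \o shift t) (h *: 1) - x t i j))
    @ 0^' --> dx i j.
  have -> : (fun h : R => h^-1 *: (((fun s => x s i j) \o shift t) (h *: 1) - x t i j)) =
      (fun M : 'M[R]_(m, n) => M i j) \o (fun h : R => h^-1 *: ((x \o shift t) (h *: 1) - x t)).
    by apply: funext => h /=; rewrite !mxE.
  exact: cvg_comp cv (@coord_continuous R m n i j dx).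
by split; [apply/cvg_ex; exists (dx i j) | exact: cvg_lim].
Qed.

Lemma is_derive_qform n (M : 'M[R]_n) (u : R -> 'cV[R]_n) (t : R) du : M^T = M ->
  is_derive t 1 u du -> is_derive t 1 (fun s => qform M (u s)) (2 * dot (u t) (M *m du)).
Proof.
move=> sM hu.
have -> : (fun s => qform M (u s)) = \sum_i \sum_j (fun s => M i j * (u s i 0 * u s j 0)).
  apply: funext => s; rewrite qform_sum fct_sumE.
  by apply: eq_bigr => i _; rewrite fct_sumE.
have hd : is_derive t 1 (\sum_i \sum_j (fun s => M i j * (u s i 0 * u s j 0)))
    (dot du (M *m u t) + dot (u t) (M *m du)).
  apply: is_derive_eq.
    apply: is_derive_sum => i; apply: is_derive_sum => j.
    apply: (@is_deriveZ _ _ _ (fun s => u s i 0 * u s j 0) (M i j)).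
    exact: is_deriveM (is_derive_coord i 0 hu) (is_derive_coord j 0 hu).
  rewrite !dotE -big_split /=; apply: eq_bigr => i _.
  rewrite !mxE !mulr_sumr -big_split /=; apply: eq_bigr => j _.
  by rewrite /GRing.scale /=; ring.
by apply: is_derive_eq hd _; rewrite -{1}sM dot_trmx; ring.
Qed.

End QuadraticForm.

Section PositiveDefinite.
Variable R : realType.

Lemma mx_entry_le_norm m n (A : 'M[R]_(m, n)) i j : `|A i j| <= `|A|.
Proof.
rewrite [`|A|]mx_normrE.
exact: (le_bigmax _ (fun ij : 'I_m * 'I_n => `|A ij.1 ij.2|) (i, j)).
Qed.

Lemma mx_norm_trmx m n (A : 'M[R]_(m, n)) : `|A^T| = `|A|.
Proof.
apply/eqP; rewrite eq_le; apply/andP; split.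
  rewrite [`|A^T|]mx_normrE; apply: bigmax_le => // ij _.
  by rewrite mxE; exact: mx_entry_le_norm.
rewrite [`|A|]mx_normrE; apply: bigmax_le => // ij _.
by have := mx_entry_le_norm A^T ij.2 ij.1; rewrite mxE.
Qed.

Lemma qform_le_sqrnorm n (M : 'M[R]_n) :
  exists2 C : R, 0 <= C & forall v, qform M v <= C * `|v| ^+ 2.
Proof.
exists (\sum_i \sum_j `|M i j|) => [|v].
  by apply: sumr_ge0 => i _; apply: sumr_ge0.
rewrite qform_sum mulr_suml; apply: ler_sum => i _.
rewrite mulr_suml; apply: ler_sum => j _.
apply: le_trans (ler_norm _) _; rewrite !normrM.
apply: ler_wpM2l => //; rewrite expr2.
by apply: ler_pM => //; exact: mx_entry_le_norm.
Qed.

Lemma posdef_qform_ge0 n (P : 'M[R]_n) : posdef P -> forall v, 0 <= qform P v.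
Proof.
move=> [_ hP] v; have [->|vn0] := eqVneq v 0; first by rewrite qform0.
exact/ltW/hP.
Qed.

Lemma posdef_sqrnorm_le n (P : 'M[R]_n) :
  posdef P -> exists2 m : R, 0 < m & forall v, m * `|v| ^+ 2 <= qform P v.
Proof.
move=> [_ Ppos].
pose S := [set r : 'rV[R]_n | `|r| = 1].
have [[r0 Sr0]|S0] := pselect (S !=set0); last first.
  exists 1 => // v; have [->|vn0] := eqVneq v 0.
    by rewrite normr0 qform0 expr0n mulr0.
  exfalso; apply: S0; exists (`|v^T|^-1 *: v^T).
  by rewrite /S /= normrZ normfV normr_id mulVf // normr_eq0 trmx_eq0.
have cS : compact S.
  apply: bounded_closed_compact.
    by exists 1; split => // x x1 r; rewrite /S /= => ->; exact: ltW.
  have -> : S = (fun r : 'rV[R]_n => `|r|) @^-1` [set x | x = 1] by [].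
  apply: preimage_closed; last exact: closed_eq.
  by move=> x _; exact: norm_continuous.
have qT_cont : continuous (fun r : 'rV[R]_n => qform P r^T).
  apply: qform_comp_continuous => i.
  have -> : (fun r : 'rV[R]_n => r^T i 0) = (fun r => r 0 i).
    by apply: funext => r; rewrite mxE.
  exact: coord_continuous.
have [c Sc cmin] := EVT_min_rV (ex_intro _ r0 Sr0) cS (continuous_subspaceT qT_cont).
rewrite inE /S /= in Sc.
exists (qform P c^T); first by apply: Ppos; rewrite trmx_eq0 -normr_eq0 Sc oner_eq0.
move=> v; have [->|vn0] := eqVneq v 0; first by rewrite normr0 qform0 expr0n mulr0.
have vp : 0 < `|v| by rewrite normr_gt0.
have := cmin (`|v|^-1 *: v^T).
rewrite inE /S /= normrZ normfV normr_id mx_norm_trmx mulVf ?gt_eqF //.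
move=> /(_ erefl); rewrite linearZ /= trmxK qform_scalev.
by rewrite -ler_pdivlMr ?exprn_gt0 // mulrC exprVn.
Qed.

Lemma posdef_dominates n (G P : 'M[R]_n) :
  posdef P -> exists2 k : R, 0 <= k & forall v, qform G v <= k * qform P v.
Proof.
move=> /posdef_sqrnorm_le [m m0 hm]; have [C C0 hC] := qform_le_sqrnorm G.
exists (C / m) => [|v]; first by rewrite divr_ge0 // ltW.
apply: le_trans (hC v) _.
have -> : C * `|v| ^+ 2 = C / m * (m * `|v| ^+ 2).
  by rewrite mulrA divfK // lt0r_neq0.
by rewrite ler_wpM2l // divr_ge0 // ltW.
Qed.

Lemma posdef_unit n (P : 'M[R]_n) : posdef P -> P \in unitmx.
Proof.
move=> [sP hP]; rewrite unitmxE unitfE; apply/negP => /det0P [v vn0 vP].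
have : 0 < qform P v^T by apply: hP; rewrite trmx_eq0.
by rewrite qformE -{1}sP -trmx_mul vP trmx0 dot0r ltxx.
Qed.

Lemma posdef_invmx n (P : 'M[R]_n) : posdef P -> posdef (invmx P).
Proof.
move=> hP; have uP := posdef_unit hP; case: hP => [sP hP].
split=> [|v vn0]; first by rewrite trmx_inv sP.
rewrite -(mulKVmx uP v) qform_mulmx sP mulmxKV //.
apply: hP; apply: contraNneq vn0 => h.
by rewrite -(mulKVmx uP v) h mulmx0.
Qed.

Lemma qform_invmx n (P : 'M[R]_n) v : P^T = P -> P \in unitmx ->
  qform P (invmx P *m v) = qform (invmx P) v.
Proof. by move=> sP uP; rewrite qform_mulmx trmx_inv sP mulmxK. Qed.

Lemma posdef_scale n k (P : 'M[R]_n) : 0 < k -> posdef P -> posdef (k *: P).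
Proof.
move=> k0 [sP hP]; split=> [|v vn0]; first by rewrite linearZ /= sP.
by rewrite qformZ mulr_gt0 // hP.
Qed.

Lemma posdef_block_diag n1 n2 (P : 'M[R]_n1) (Q : 'M[R]_n2) :
  posdef P -> posdef Q -> posdef (block_mx P 0 0 Q).
Proof.
move=> hP hQ; split; first by rewrite tr_block_mx hP.1 hQ.1 !trmx0.
move=> v; rewrite -[v](vsubmxK v) qform_block_diag col_mx_eq0 negb_and.
have := posdef_qform_ge0 hP (usubmx v); have := posdef_qform_ge0 hQ (dsubmx v).
by case: hP hQ => [_ Pp] [_ Qp] ? ?; case/orP => [/Pp | /Qp]; lra.
Qed.

(* Expand [0 <= qform P (r *: xi + P^-1 g)]. *)
Lemma young_qform n (P : 'M[R]_n) (xi g : 'cV[R]_n) (r : R) : posdef P -> 0 < r ->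
  - 2 * dot xi g <= r * qform P xi + r^-1 * qform (invmx P) g.
Proof.
move=> hP r0; have uP := posdef_unit hP.
have := posdef_qform_ge0 hP (r *: xi + invmx P *m g).
rewrite qformE !mulmxDr !dotDl !dotDr mulKVmx // -!scalemxAr !dotZl !dotZr.
rewrite -[P in P *m xi]hP.1 (dot_trmx (invmx P *m g)) mulKVmx //.
rewrite (dotC (invmx P *m g)) -!qformE qform_trmx => h.
have : 0 <= r^-1 * (r * (r * qform P xi) + r * dot xi g + (r * dot xi g + qform (invmx P) g)).
  by apply: mulr_ge0; [rewrite invr_ge0 ltW | exact: h].
have -> : r^-1 * (r * (r * qform P xi) + r * dot xi g + (r * dot xi g + qform (invmx P) g))
    = r * qform P xi + 2 * dot xi g + r^-1 * qform (invmx P) g.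
  by field; rewrite lt0r_neq0.
lra.
Qed.

Lemma norm_le_of_qform_le n (Q : 'M[R]_n) (b : R) : posdef Q -> 0 <= b ->
  exists k1 k2 : R, [/\ 0 < k1, 0 < k2 & forall (u v : 'cV[R]_n) (E W : R),
    0 <= E -> 0 <= W -> qform Q v <= E ^+ 2 * qform Q u + b * W ^+ 2 ->
    `|v| <= k1 * `|u| * E + k2 * W].
Proof.
move=> Q_pd b0; have [m m0 Qlb] := posdef_sqrnorm_le Q_pd.
have [M M0 Qub] := qform_le_sqrnorm Q.
have k1_gt0 : 0 < M / m + 1 by rewrite ltr_wpDl // divr_ge0 // ltW.
have k2_gt0 : 0 < b / m + 1 by rewrite ltr_wpDl // divr_ge0 // ltW.
exists (M / m + 1), (b / m + 1); split=> // u v E W E0 W0 hv.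
have sq : `|v| ^+ 2 <= M / m * (E * `|u|) ^+ 2 + b / m * W ^+ 2.
  have -> : M / m * (E * `|u|) ^+ 2 + b / m * W ^+ 2 = (M * (E * `|u|) ^+ 2 + b * W ^+ 2) / m.
    by field; rewrite lt0r_neq0.
  rewrite ler_pdivlMr // mulrC; apply: le_trans (Qlb v) (le_trans hv _).
  by rewrite lerD2r exprMn mulrCA ler_wpM2l ?exprn_ge0.
have k1uE : 0 <= (M / m + 1) * `|u| * E by rewrite !mulr_ge0 // ltW.
have k2W : 0 <= (b / m + 1) * W by rewrite mulr_ge0 // ltW.
rewrite -ler_sqr ?nnegrE ?addr_ge0 //; apply: le_trans sq _.
rewrite sqrrD !exprMn; have := mulr_ge0 k1uE k2W; nra.
Qed.

End PositiveDefinite.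

Section ExponentialDecay.
Variable R : realType.

Lemma is_derive_expRM (c x : R) :
  is_derive x 1 (fun s => expR (c * s)) (expR (c * x) * c).
Proof.
apply: (@is_derive1_comp _ expR (fun s => c * s)).
by rewrite -[c in is_derive _ _ _ c]mulr1; exact: is_deriveZ.
Qed.

Lemma expRM_continuous (c : R) : continuous (fun s : R => expR (c * s)).
Proof.
by move=> s; apply: continuous_comp; [exact: mulrl_continuous | exact: continuous_expR].
Qed.

(* [expR (c s) (U s - b / c)] is nonincreasing. *)
Lemma decay_of_derive_le (U : R -> R) (c b : R) : 0 < c -> 0 <= b ->
  {within `[0, +oo[, continuous U} ->
  (forall t : R, 0 < t -> exists2 dU, is_derive t 1 U dU & dU <= - c * U t + b) ->
  forall t, 0 <= t -> U t <= expR (- (c * t)) * U 0 + b / c.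
Proof.
move=> c0 b0 cU dU t t0.
pose g := (fun s => expR (c * s)) * (U - cst (b / c)).
have g_decr (s : R) : 0 < s -> exists2 dg, is_derive s 1 g dg & dg <= 0.
  move=> s0; have [du hdu le] := dU s s0.
  have hg := is_deriveM (is_derive_expRM c s) (is_deriveB hdu (is_derive_cst (b / c) s 1)).
  exists (expR (c * s) * (du + c * U s - b)); last by rewrite pmulr_rle0 ?expR_gt0 //; lra.
  apply: is_derive_eq hg _; rewrite /GRing.scale /= subr0 !fctE /cst.
  by field; rewrite lt0r_neq0.
have cg : {within `[0, +oo[, continuous g}.
  move=> s; apply: cvgM; first exact: continuous_subspaceT (@expRM_continuous c) s.
  by apply: cvgB; [exact: cU | exact: cvg_cst].
have gle : g t <= g 0.
  move: t0; rewrite le_eqVlt => /predU1P [<-|tp] //.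
  apply: (@ler0_derive1_le_cc _ g 0 t) => [x|x||||]; rewrite ?in_itv /=.
  - by move=> /andP [x0 _]; have [dg [hd _] _] := g_decr x x0.
  - by move=> /andP [x0 _]; have [dg hd le] := g_decr x x0; rewrite derive1E derive_val.
  - apply: continuous_subspaceW cg => x /=; rewrite !in_itv /= => /andP [-> _] //.
  - by rewrite lexx ltW.
  - by rewrite lexx ltW.
  - exact: ltW.
have ectN : expR (- (c * t)) * expR (c * t) = 1 by rewrite -expRD addNr expR0.
have : U t - b / c <= expR (- (c * t)) * (U 0 - b / c).
  have := ler_wpM2l (ltW (expR_gt0 (- (c * t)))) gle.
  by rewrite /g !fctE mulr0 expR0 mul1r mulrA ectN mul1r.
have : 0 <= expR (- (c * t)) * (b / c) := mulr_ge0 (expR_ge0 _) (divr_ge0 b0 (ltW c0)).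
rewrite mulrBr; lra.
Qed.

Lemma expRN_cvg0 (a : R) : 0 < a -> expR (- (a * t)) @[t --> +oo] --> 0.
Proof.
move=> a0; apply: (cvg_comp _ _ _ (@cvgr_expR R)).
by apply: gt0_cvgMry => //; exact: cvg_id.
Qed.

End ExponentialDecay.

Section ComparisonFunctions.
Variable R : realType.

Lemma classK_scale (k : R) : 0 < k -> classK (fun r => k * r).
Proof.
move=> k0; split; first by rewrite mulr0.
split; first exact: continuous_subspaceT (@mulrl_continuous _ k).
by move=> a b _ ab; rewrite ltr_pM2l.
Qed.

Lemma classKL_exp (k a : R) : 0 < k -> 0 < a ->
  classKL (fun s t => k * s * expR (- (a * t))).
Proof.
move=> k0 a0; split=> [t _|s s0].
  split; first by rewrite mulr0 mul0r.
  split; last by move=> x y _ xy; rewrite ltr_pM2r ?expR_gt0 // ltr_pM2l.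
  by apply: continuous_subspaceT => s; apply: cvgMr_tmp; exact: mulrl_continuous.
split=> [t1 t2 _ t12|].
  apply: ler_wpM2l; first by rewrite mulr_ge0 // ltW.
  by rewrite ler_expR lerN2 ler_wpM2l // ltW.
by rewrite -(mulr0 (k * s)); apply: cvgMl_tmp; exact: expRN_cvg0.
Qed.

Lemma sup_norm_ub n (w : R -> 'cV[R]_n) :
  bounded_input w -> forall t, 0 <= t -> `|w t| <= sup_norm w.
Proof.
move=> [M hM] t t0; apply: sup_upper_bound; last by exists t; rewrite /= ?in_itv /= ?t0.
split; first by exists `|w 0|, 0; rewrite //= in_itv /= lexx.
by exists M => _ [s hs <-]; apply: hM; move: hs; rewrite /= in_itv /= andbT.
Qed.

Lemma sup_norm_ge0 n (w : R -> 'cV[R]_n) : bounded_input w -> 0 <= sup_norm w.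
Proof. by move=> w_bd; apply: le_trans (sup_norm_ub w_bd (lexx 0)). Qed.

End ComparisonFunctions.

Section LoopTransformation.
Variable R : realType.
Variables nq np : nat.
Implicit Types (T : 'M[R]_(nq + np)) (dq : 'cV[R]_nq) (dp : 'cV[R]_np).

(* [Gam1 T] is the Schur complement of [Tb4 T] in [T]. *)
Lemma Gam1_unit T : T \in unitmx -> Tb4 T \in unitmx -> Gam1 T \in unitmx.
Proof.
rewrite /Gam1 /Tb1 /Tb2 /Tb3 /Tb4 -{1}(submxK T).
move: (ulsubmx T) (ursubmx T) (dlsubmx T) (drsubmx T) => a b c d hT hd.
have elim_b : block_mx 1%:M (- (b *m invmx d)) 0 1%:M *m block_mx a b c d =
    block_mx (a - b *m invmx d *m c) 0 c d.
  by rewrite mulmx_block !mul1mx !mul0mx !add0r !mulNmx -!mulmxA mulVmx // mulmx1 subrr.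
have := congr1 determinant elim_b.
rewrite det_mulmx det_ublock det_lblock !det1 !mul1r => hdet.
by move: hT hd; rewrite !unitmxE !unitfE hdet mulf_eq0 negb_or => /andP [].
Qed.

Lemma qform_multiplier T (X : 'M[R]_nq) (Y : 'M[R]_np) dq dp :
  qform (T^T *m block_mx X 0 0 (- Y) *m T) (col_mx dq dp) =
  qform X (Tb1 T *m dq + Tb2 T *m dp) - qform Y (Tb3 T *m dq + Tb4 T *m dp).
Proof.
by rewrite -qform_mulmx -{1}(submxK T) mul_block_col qform_block_diag qformN.
Qed.

Lemma loop_transform_dp T dq dp : Tb4 T \in unitmx ->
  dp = invmx (Tb4 T) *m (Tb3 T *m dq + Tb4 T *m dp) - invmx (Tb4 T) *m Tb3 T *m dq.
Proof. by move=> u4; rewrite mulmxDr mulKmx // -mulmxA addrAC subrr add0r. Qed.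

Lemma loop_transform_Gam T dq dp : Tb4 T \in unitmx ->
  Tb1 T *m dq + Tb2 T *m dp = Gam1 T *m dq + Gam2 T *m (Tb3 T *m dq + Tb4 T *m dp).
Proof.
move=> u4; rewrite {1}(loop_transform_dp dq dp u4) /Gam1 /Gam2 mulmxBl mulmxBr -!mulmxA.
by rewrite addrCA addrC.
Qed.

End LoopTransformation.

Section LMIExpansion.
Variable R : realType.

Lemma qform_sym3 n1 n2 n3 (a : 'M[R]_n1) b c (d : 'M[R]_n2) e (f : 'M[R]_n3) u v w :
  qform (sym3 a b c d e f) (col_mx (col_mx u v) w) =
  qform a u + 2 * dot u (b *m v) + qform d v + 2 * (dot u (c *m w) + dot v (e *m w))
  + qform f w.
Proof. by rewrite /sym3 -tr_col_mx !qform_block_sym mul_col_mx dot_col. Qed.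

Lemma varphi_mul nx np nw (u : 'cV[R]_nx) (v : 'cV[R]_np) (w : 'cV[R]_nw) :
  varphi R nx np nw *m col_mx (col_mx u v) w = v.
Proof. by rewrite /varphi !mul_row_col !mul0mx mul1mx add0r addr0. Qed.

Lemma qform0mx n (v : 'cV[R]_n) : qform 0 v = 0.
Proof. by rewrite qformE mul0mx dot0r. Qed.

Lemma qform1mx n (v : 'cV[R]_n) : qform 1%:M v = dot v v.
Proof. by rewrite qformE mul1mx. Qed.

Variables nx ny nu nw nq np : nat.
Variables (A : 'M[R]_nx) (B : 'M[R]_(nx, nu)) (C : 'M[R]_(ny, nx)) (E : 'M[R]_(nx, np)).
Variables (Ew : 'M[R]_(nx, nw)) (Fw : 'M[R]_(ny, nw)) (Cq : 'M[R]_(nq, nx)).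

Section Observer.
Variables (T1 : 'M[R]_(nq + np)) (alpha1 mu1 : R) (P1 : 'M[R]_nx).
Variables (R1 : 'M[R]_(nx, ny)) (R2 : 'M[R]_(nq, ny)) (X1 : 'M[R]_nq) (Y1 : 'M[R]_np).
Variables (L1 : 'M[R]_(nq, ny)) (L2 : 'M[R]_(nx, ny)).
Hypothesis P1_sym : P1^T = P1.
Hypotheses (P1_unit : P1 \in unitmx) (X1_unit : X1 \in unitmx).
Hypotheses (T14_unit : Tb4 T1 \in unitmx) (G1_unit : Gam1 T1 \in unitmx).
Hypothesis L1_def : L1 = invmx (Gam1 T1) *m invmx X1 *m R2.
Hypothesis L2_def : L2 = invmx P1 *m R1 + E *m invmx (Tb4 T1) *m Tb3 T1 *m L1.
Hypothesis LMI1_nsd : negsemidef (LMI1 A C E Ew Fw Cq T1 alpha1 mu1 P1 R1 R2 X1 Y1).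

Lemma qform_LMI1 e v w z :
  qform (LMI1 A C E Ew Fw Cq T1 alpha1 mu1 P1 R1 R2 X1 Y1)
    (col_mx (col_mx (col_mx e v) w) z) =
  2 * dot e (P1 *m (Atil A E Cq T1 *m e - Etil E T1 *m v + Ew *m w)
             + R1 *m (C *m e + Fw *m w))
  + alpha1 * qform P1 e - mu1 * dot w w - qform Y1 v
  - 2 * dot z (X1 *m (Gam1 T1 *m (Cq *m e) - Gam2 T1 *m v) + R2 *m (C *m e + Fw *m w))
  - qform X1 z.
Proof.
rewrite /LMI1; cbv zeta.
rewrite -[X in block_mx _ _ X _]trmxK qform_block_sym dot_trmx qformD !qformN.
rewrite -qform_mulmx varphi_mul qform_sym3 qform0mx qformN qformZ qform1mx.
rewrite !qformD qformZ -[P1 in _^T *m P1]P1_sym -!trmx_mul !qform_trmx.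
rewrite !mul_row_col !qformE.
rewrite !(mulmxDl, mulmxDr, mulmxBl, mulmxBr, mulNmx, mulmxN, mul0mx) -!mulmxA.
by rewrite !(dotDr, dotNr, dot0r); ring.
Qed.

Lemma observer_dissipation e ed w dq dp :
  dq = Cq *m e + L1 *m (C *m e + Fw *m w) ->
  ed = A *m e + E *m dp + Ew *m w + L2 *m (C *m e + Fw *m w) ->
  0 <= qform (T1^T *m block_mx X1 0 0 (- Y1) *m T1) (col_mx dq dp) ->
  2 * dot e (P1 *m ed) <= - alpha1 * qform P1 e + mu1 * dot w w.
Proof.
move=> dq_def ed_def; rewrite qform_multiplier subr_ge0.
set z := Tb1 T1 *m dq + Tb2 T1 *m dp; set v := Tb3 T1 *m dq + Tb4 T1 *m dp => mult.
have Xz : X1 *m (Gam1 T1 *m (Cq *m e) - Gam2 T1 *m (- v)) + R2 *m (C *m e + Fw *m w)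
    = X1 *m z.
  rewrite /z loop_transform_Gam // -/v dq_def L1_def mulmxN opprK !mulmxDr -!mulmxA.
  by rewrite !mulKVmx //; apply/matrixP => i j; rewrite !mxE; ring.
have Ped : P1 *m ed = P1 *m (Atil A E Cq T1 *m e - Etil E T1 *m (- v) + Ew *m w)
                      + R1 *m (C *m e + Fw *m w).
  rewrite ed_def L2_def {1}(loop_transform_dp dq dp T14_unit) -/v dq_def /Atil /Etil.
  rewrite !(mulmxDl, mulmxDr, mulmxBl, mulmxBr, mulNmx, mulmxN) -!mulmxA !mulKVmx //.
  by apply/matrixP => i j; rewrite !mxE; ring.
(* Tested at the loop-transformed increment, the off-diagonal block of the LMI is [X1 z]. *)
have := LMI1_nsd (col_mx (col_mx (col_mx e (- v)) w) (- z)).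
rewrite qform_LMI1 Xz -Ped dotNl -[dot z _]qformE !qform_oppv.
lra.
Qed.

End Observer.

Section Controller.
Variables (T2 : 'M[R]_(nq + np)) (alpha2 mu2 : R) (P2 : 'M[R]_nx).
Variables (R3 : 'M[R]_(nu, nx)) (R4 : 'M[R]_(nu, np)) (X2 : 'M[R]_nq) (Y2 : 'M[R]_np).
Variable K1 : 'M[R]_(nu, nx).
Hypothesis P2_sym : P2^T = P2.
Hypotheses (P2_unit : P2 \in unitmx) (X2_unit : X2 \in unitmx) (Y2_unit : Y2 \in unitmx).
Hypotheses (T24_unit : Tb4 T2 \in unitmx) (R4_0 : R4 = 0).
Hypothesis K1_def : K1 = R3 *m invmx P2.
Hypothesis LMI2_nsd : negsemidef (LMI2 A B E Ew Cq T2 alpha2 mu2 P2 R3 R4 X2 Y2).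

Lemma qform_LMI2 xi eta w zeta :
  qform (LMI2 A B E Ew Cq T2 alpha2 mu2 P2 R3 R4 X2 Y2)
    (col_mx (col_mx (col_mx xi eta) w) zeta) =
  2 * dot xi (Atil A E Cq T2 *m (P2 *m xi) + B *m (R3 *m xi)
              + (Etil E T2 *m Y2 + B *m R4) *m eta + Ew *m w)
  + alpha2 * qform P2 xi - mu2 * dot w w - qform Y2 eta
  + 2 * dot zeta (Gam1 T2 *m (Cq *m (P2 *m xi)) + Gam2 T2 *m (Y2 *m eta))
  - qform X2 zeta.
Proof.
rewrite /LMI2; cbv zeta.
rewrite -[X in block_mx _ _ X _]trmxK qform_block_sym dot_trmx qformD !qformN.
rewrite -qform_mulmx varphi_mul qform_sym3 qform0mx qformN qformZ qform1mx.
rewrite !qformD qformZ -[P2 in P2 *m _^T]P2_sym -!trmx_mul !qform_trmx.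
rewrite !mul_row_col !qformE !(mulmxDl, mul0mx) -!mulmxA.
by rewrite !(dotDr, dot0r); ring.
Qed.

Lemma controller_dissipation x xd e w pq :
  xd = A *m x + B *m (K1 *m (x - e)) + E *m pq + Ew *m w ->
  0 <= qform (T2^T *m block_mx (invmx X2) 0 0 (- invmx Y2) *m T2) (col_mx (Cq *m x) pq) ->
  2 * dot x (invmx P2 *m xd) <=
    - alpha2 * qform (invmx P2) x + mu2 * dot w w - 2 * dot (invmx P2 *m x) (B *m (K1 *m e)).
Proof.
move=> xd_def; rewrite qform_multiplier subr_ge0.
set z := Tb1 T2 *m _ + _; set v := Tb3 T2 *m _ + _ => mult.
(* The second LMI is stated in the dual variables [P2^-1 x], [Y2^-1 v] and [X2^-1 z]. *)
set xi := invmx P2 *m x; have Pxi : P2 *m xi = x by rewrite mulKVmx.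
pose eta := invmx Y2 *m v; have Yeta : Y2 *m eta = v by rewrite mulKVmx.
pose zeta := invmx X2 *m z; have Xzeta : X2 *m zeta = z by rewrite mulKVmx.
have psi : Gam1 T2 *m (Cq *m (P2 *m xi)) + Gam2 T2 *m (Y2 *m eta) = z.
  by rewrite Pxi Yeta /z loop_transform_Gam.
have dyn : xd = Atil A E Cq T2 *m (P2 *m xi) + B *m (R3 *m xi)
                + (Etil E T2 *m Y2 + B *m R4) *m eta + Ew *m w - B *m (K1 *m e).
  rewrite R4_0 mulmx0 addr0 -mulmxA Yeta Pxi xd_def K1_def /xi.
  rewrite {1}(loop_transform_dp (Cq *m x) pq T24_unit) -/v /Atil /Etil.
  rewrite !(mulmxDl, mulmxDr, mulmxBl, mulmxBr, mulNmx, mulmxN) -!mulmxA.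
  by apply/matrixP => i j; rewrite !mxE; ring.
have := LMI2_nsd (col_mx (col_mx (col_mx xi eta) w) zeta).
rewrite qform_LMI2 psi !qformE Pxi Yeta Xzeta.
move: mult; rewrite !qformE -/eta -/zeta (dotC v) (dotC z).
have Qsym : (invmx P2)^T = invmx P2 by rewrite trmx_inv P2_sym.
have -> : dot x (invmx P2 *m xd) = dot xi xd by rewrite -{1}Qsym dot_trmx dotC.
move=> mult LMI; rewrite -/xi (dotC x) dyn Pxi dotDr dotNr; lra.
Qed.

End Controller.
End LMIExpansion.

Lemma composite_rate (R : realType) (alpha1 alpha2 kG kap a b : R) :
  0 < alpha2 -> 0 <= kap -> 4 / alpha2 * kG <= kap * alpha1 -> 0 <= a -> 0 <= b ->
  - alpha2 * a + alpha2 / 2 * a + 2 / alpha2 * (kG * b) + kap * (- alpha1 * b)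
    <= - Num.min (alpha2 / 2) (alpha1 / 2) * (a + kap * b).
Proof.
move=> a2 kap0 kap_big a0 b0.
set c := Num.min _ _.
have h1 : c * a <= alpha2 / 2 * a by rewrite ler_wpM2r // ge_min lexx.
have h2 : c * (kap * b) <= alpha1 / 2 * (kap * b).
  by rewrite ler_wpM2r ?mulr_ge0 // ge_min lexx orbT.
have h3 : 2 / alpha2 * kG * b <= kap * alpha1 / 2 * b.
  apply: ler_wpM2r => //.
  have -> : 2 / alpha2 * kG = 4 / alpha2 * kG / 2 by field; rewrite lt0r_neq0.
  lra.
rewrite !mulrA in h2 h3 *; lra.
Qed.

Section ClosedLoop.
Variable R : realType.
Variables nx nu ny nw nq np : nat.
Variables (A : 'M[R]_nx) (B : 'M[R]_(nx, nu)) (E : 'M[R]_(nx, np)) (Ew : 'M[R]_(nx, nw)).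
Variables (C : 'M[R]_(ny, nx)) (D : 'M[R]_(ny, nu)) (Fw : 'M[R]_(ny, nw)).
Variables (Cq : 'M[R]_(nq, nx)) (p : 'cV[R]_nq -> 'cV[R]_np).
Variables (L1 : 'M[R]_(nq, ny)) (L2 : 'M[R]_(nx, ny)) (K1 : 'M[R]_(nu, nx)).

Lemma closed_loop_error_form w x xh (s : R) :
  closed_loop_solution A B E Ew C D Fw Cq p L1 L2 K1 w x xh -> 0 < s ->
  let e := x s - xh s in
  exists qo,
  [/\ is_derive s 1 x (A *m x s + B *m (K1 *m (x s - e)) + E *m p (Cq *m x s) + Ew *m w s),
      is_derive s 1 (x - xh)
        (A *m e + E *m (p (Cq *m x s) - p qo) + Ew *m w s + L2 *m (C *m e + Fw *m w s)) &
      Cq *m x s - qo = Cq *m e + L1 *m (C *m e + Fw *m w s)].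
Proof.
move=> [_ [_ sol]] s0 e; have [dx dxh] := sol s s0.
exists (Cq *m xh s + L1 *m (C *m xh s + D *m (K1 *m xh s)
                          - (C *m x s + D *m (K1 *m xh s) + Fw *m w s))).
have -> : x s - e = xh s by rewrite /e opprB addrC subrK.
split => //.
  apply: is_derive_eq (is_deriveB dx dxh) _.
  rewrite /e !(mulmxDr, mulmxBr, mulmxN, opprD, opprB).
  by apply/matrixP => i j; rewrite !mxE; ring.
rewrite /e !(mulmxDr, mulmxBr, mulmxN, opprD, opprB).
by apply/matrixP => i j; rewrite !mxE; ring.
Qed.

Lemma closed_loop_qform_continuous w x xh (Q1 Q2 : 'M[R]_nx) :
  closed_loop_solution A B E Ew C D Fw Cq p L1 L2 K1 w x xh ->
  {within `[0, +oo[, continuous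
    (fun t => qform (block_mx Q1 0 0 Q2) (col_mx (x t) (x t - xh t)))}.
Proof.
move=> [x_cont [xh_cont _]] s.
have -> : (fun t => qform (block_mx Q1 0 0 Q2) (col_mx (x t) (x t - xh t)))
    = (fun t => qform Q1 (x t) + qform Q2 (x t - xh t)).
  by apply: funext => t; rewrite qform_block_diag.
apply: cvgD; first exact: (continuous_comp (x_cont s) (@qform_continuous R nx Q1 (x s))).
have e_cont : {for s, continuous
    ((fun t => x t - xh t) : subspace `[0, +oo[%classic -> 'cV[R]_nx)}.
  exact: cvgB (x_cont s) (xh_cont s).
exact: (continuous_comp e_cont (@qform_continuous R nx Q2 (x s - xh s))).
Qed.

Variables (T1 T2 : 'M[R]_(nq + np)) (alpha1 alpha2 mu1 mu2 : R).
Variables (R1 : 'M[R]_(nx, ny)) (R2 : 'M[R]_(nq, ny)) (R3 : 'M[R]_(nu, nx)).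
Variables (R4 : 'M[R]_(nu, np)) (P1 P2 : 'M[R]_nx) (X1 X2 : 'M[R]_nq) (Y1 Y2 : 'M[R]_np).
Hypothesis p0 : p 0 = 0.
Hypotheses (T1_unit : T1 \in unitmx) (T14_unit : Tb4 T1 \in unitmx).
Hypothesis T24_unit : Tb4 T2 \in unitmx.
Hypothesis mult1 : delta_MM p (T1^T *m block_mx X1 0 0 (- Y1) *m T1).
Hypothesis mult2 : delta_MM p (T2^T *m block_mx (invmx X2) 0 0 (- invmx Y2) *m T2).
Hypotheses (alpha1_gt0 : 0 < alpha1) (alpha2_gt0 : 0 < alpha2).
Hypotheses (mu1_gt0 : 0 < mu1) (mu2_gt0 : 0 < mu2).
Hypotheses (P1_pd : posdef P1) (P2_pd : posdef P2) (X1_pd : posdef X1).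
Hypotheses (X2_pd : posdef X2) (Y2_pd : posdef Y2) (R4_0 : R4 = 0).
Hypothesis LMI1_nsd : negsemidef (LMI1 A C E Ew Fw Cq T1 alpha1 mu1 P1 R1 R2 X1 Y1).
Hypothesis LMI2_nsd : negsemidef (LMI2 A B E Ew Cq T2 alpha2 mu2 P2 R3 R4 X2 Y2).
Hypothesis L1_def : L1 = invmx (Gam1 T1) *m invmx X1 *m R2.
Hypothesis L2_def : L2 = invmx P1 *m R1 + E *m invmx (Tb4 T1) *m Tb3 T1 *m L1.
Hypothesis K1_def : K1 = R3 *m invmx P2.

Section Weights.
Variables (kG kap Cw : R).
Hypotheses (kap_ge0 : 0 <= kap) (kap_big : 4 / alpha2 * kG <= kap * alpha1).
Hypothesis kG_dom :
  forall v, qform ((B *m K1)^T *m invmx P2 *m (B *m K1)) v <= kG * qform P1 v.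
Hypotheses (Cw_ge0 : 0 <= Cw) (Cw_dom : forall v : 'cV[R]_nw, dot v v <= Cw * `|v| ^+ 2).

Lemma lyapunov_derivative_le w x xh (s : R) :
  bounded_input w -> closed_loop_solution A B E Ew C D Fw Cq p L1 L2 K1 w x xh -> 0 < s ->
  let U t := qform (block_mx (invmx P2) 0 0 (kap *: P1)) (col_mx (x t) (x t - xh t)) in
  exists2 dU, is_derive s 1 U dU &
    dU <= - Num.min (alpha2 / 2) (alpha1 / 2) * U s + (mu2 + kap * mu1) * (Cw * sup_norm w ^+ 2).
Proof.
move=> w_bd sol s0 U.
have [qo [dx de dq]] := closed_loop_error_form sol s0.
set e := x s - xh s in dx de dq.
have sP1 : (kap *: P1)^T = kap *: P1 by rewrite linearZ /= P1_pd.1.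
have -> : U = (fun t => qform (invmx P2) (x t) + qform (kap *: P1) ((x - xh) t)).
  by apply: funext => t; rewrite /U /= qform_block_diag.
eexists; first exact: is_deriveD (is_derive_qform (posdef_invmx P2_pd).1 dx)
                                 (is_derive_qform sP1 de).
rewrite /= qformZ -scalemxAl dotZr -/e.
have obs := observer_dissipation P1_pd.1 (posdef_unit P1_pd) (posdef_unit X1_pd) T14_unit
  (Gam1_unit T1_unit T14_unit) L1_def L2_def LMI1_nsd dq erefl (mult1.2 qo _).
have := mult2.2 0 (Cq *m x s); rewrite subr0 p0 subr0 => mult2x.
have ctrl := controller_dissipation (e := e) (w := w s) P2_pd.1 (posdef_unit P2_pd)
  (posdef_unit X2_pd) (posdef_unit Y2_pd) T24_unit R4_0 K1_def LMI2_nsd erefl mult2x.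
have := young_qform (invmx P2 *m x s) (B *m (K1 *m e)) P2_pd (divr_gt0 alpha2_gt0 (ltr0n R 2)).
have -> : qform (invmx P2) (B *m (K1 *m e)) = qform ((B *m K1)^T *m invmx P2 *m (B *m K1)) e.
  by rewrite mulmxA qform_mulmx.
rewrite qform_invmx ?P2_pd.1 ?posdef_unit // invf_div => young.
have rate := composite_rate alpha2_gt0 kap_ge0 kap_big
  (posdef_qform_ge0 (posdef_invmx P2_pd) (x s)) (posdef_qform_ge0 P1_pd e).
have kap_obs := ler_wpM2l kap_ge0 obs.
have coupling := ler_wpM2l (divr_ge0 (ler0n R 2) (ltW alpha2_gt0)) (kG_dom e).
have wW := sup_norm_ub w_bd (ltW s0).
have w_le : dot (w s) (w s) <= Cw * sup_norm w ^+ 2.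
  apply: le_trans (Cw_dom _) _; rewrite ler_wpM2l // lerXn2r ?nnegrE //.
  exact: le_trans (normr_ge0 _) wW.
have := ler_wpM2l (addr_ge0 (ltW mu2_gt0) (mulr_ge0 kap_ge0 (ltW mu1_gt0))) w_le.
have -> : (x - xh) s = e by [].
lra.
Qed.

End Weights.

Lemma closed_loop_decay : exists (Q : 'M[R]_(nx + nx)) (c b : R),
  [/\ posdef Q, 0 < c, 0 <= b & forall w x xh,
    bounded_input w -> closed_loop_solution A B E Ew C D Fw Cq p L1 L2 K1 w x xh ->
    forall t, 0 <= t ->
      qform Q (col_mx (x t) (x t - xh t)) <=
      expR (- (c * t)) * qform Q (col_mx (x 0) (x 0 - xh 0)) + b * sup_norm w ^+ 2].
Proof.
have [kG kG_ge0 kG_dom] := posdef_dominates ((B *m K1)^T *m invmx P2 *m (B *m K1)) P1_pd.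
have [Cw Cw_ge0 Cw_dom] := qform_le_sqrnorm (1%:M : 'M[R]_nw).
pose kap := 1 + 4 * kG / (alpha1 * alpha2).
have kap_gt0 : 0 < kap by rewrite ltr_wpDr // divr_ge0 ?mulr_ge0 // ltW.
have kap_big : 4 / alpha2 * kG <= kap * alpha1.
  have -> : kap * alpha1 = alpha1 + 4 / alpha2 * kG.
    by rewrite /kap; field; rewrite !lt0r_neq0.
  by rewrite lerDr ltW.
pose c := Num.min (alpha2 / 2) (alpha1 / 2).
have c_gt0 : 0 < c by rewrite lt_min !divr_gt0.
have mu_ge0 : 0 <= mu2 + kap * mu1 by rewrite addr_ge0 ?mulr_ge0 ?ltW.
exists (block_mx (invmx P2) 0 0 (kap *: P1)), c, ((mu2 + kap * mu1) * Cw / c).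
split=> [||| w x xh w_bd sol t t0].
- exact: posdef_block_diag (posdef_invmx P2_pd) (posdef_scale kap_gt0 P1_pd).
- exact: c_gt0.
- by rewrite divr_ge0 ?mulr_ge0 // ltW.
have Cw_dom' (v : 'cV[R]_nw) : dot v v <= Cw * `|v| ^+ 2 by rewrite -qform1mx.
have U_cont := closed_loop_qform_continuous (Q1 := invmx P2) (Q2 := kap *: P1) sol.
have b_ge0 : 0 <= (mu2 + kap * mu1) * (Cw * sup_norm w ^+ 2).
  by rewrite mulr_ge0 // mulr_ge0 // exprn_ge0 // sup_norm_ge0.
have -> : (mu2 + kap * mu1) * Cw / c * sup_norm w ^+ 2
    = (mu2 + kap * mu1) * (Cw * sup_norm w ^+ 2) / c by ring.
apply: decay_of_derive_le c_gt0 b_ge0 U_cont _ _ t0 => s s0.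
exact: (lyapunov_derivative_le (ltW kap_gt0) kap_big kG_dom Cw_ge0 Cw_dom' w_bd sol s0).
Qed.

End ClosedLoop.

Unset Implicit Arguments.

Theorem corollary2 (R : realType) (nx nu ny nw nq np : nat)
  (A : 'M[R]_nx) (B : 'M[R]_(nx, nu)) (E : 'M[R]_(nx, np)) (Ew : 'M[R]_(nx, nw))
  (C : 'M[R]_(ny, nx)) (D : 'M[R]_(ny, nu)) (Fw : 'M[R]_(ny, nw)) (Cq : 'M[R]_(nq, nx))
  (p : 'cV[R]_nq -> 'cV[R]_np) (Hp0 : p 0 = 0)
  (* condition (i) *)
  (N1 : set ('M[R]_nq * 'M[R]_np)) (T1 : 'M[R]_(nq + np))
  (HT1 : T1 \in unitmx) (HT14 : Tb4 T1 \in unitmx)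
  (HN1sym : forall XY, N1 XY -> XY.1^T = XY.1 /\ XY.2^T = XY.2)
  (HN1 : forall XY, N1 XY -> delta_MM p (T1^T *m block_mx XY.1 0 0 (- XY.2) *m T1))
  (* condition (ii) *)
  (N2 : set ('M[R]_nq * 'M[R]_np)) (T2 : 'M[R]_(nq + np))
  (HT2 : T2 \in unitmx) (HT24 : Tb4 T2 \in unitmx)
  (HN2sym : forall XY, N2 XY -> XY.1^T = XY.1 /\ XY.2^T = XY.2 /\
                                XY.1 \in unitmx /\ XY.2 \in unitmx)
  (HN2 : forall XY, N2 XY ->
     delta_MM p (T2^T *m block_mx (invmx XY.1) 0 0 (- invmx XY.2) *m T2))
  (* condition (iii) *)
  (alpha1 alpha2 mu1 mu2 : R)
  (R1 : 'M[R]_(nx, ny)) (R2 : 'M[R]_(nq, ny)) (R3 : 'M[R]_(nu, nx)) (R4 : 'M[R]_(nu, np))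
  (P1 P2 : 'M[R]_nx) (X1 X2 : 'M[R]_nq) (Y1 Y2 : 'M[R]_np)
  (Ha1 : 0 < alpha1) (Ha2 : 0 < alpha2) (Hm1 : 0 < mu1) (Hm2 : 0 < mu2)
  (HP1 : posdef P1) (HP2 : posdef P2) (HX1 : posdef X1) (HY1 : Y1^T = Y1)
  (HX2 : posdef X2) (HY2 : posdef Y2)
  (HXY1 : N1 (X1, Y1)) (HXY2 : N2 (X2, Y2))
  (HR4 : R4 = 0)
  (HLMI1 : negsemidef (LMI1 A C E Ew Fw Cq T1 alpha1 mu1 P1 R1 R2 X1 Y1))
  (HLMI2 : negsemidef (LMI2 A B E Ew Cq T2 alpha2 mu2 P2 R3 R4 X2 Y2))
  (* gains *)
  (L1 : 'M[R]_(nq, ny)) (L2 : 'M[R]_(nx, ny)) (K1 : 'M[R]_(nu, nx))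
  (HL1 : L1 = invmx (Gam1 T1) *m invmx X1 *m R2)
  (HL2 : L2 = invmx P1 *m R1 + E *m invmx (Tb4 T1) *m Tb3 T1 *m L1)
  (HK1 : K1 = R3 *m invmx P2) :
  closed_loop_ISS A B E Ew C D Fw Cq p L1 L2 K1.
Proof.
have [Q [c [b [Q_pd c_gt0 b_ge0 decay]]]] := closed_loop_decay D Hp0 HT1 HT14 HT24
  (HN1 _ HXY1) (HN2 _ HXY2) Ha1 Ha2 Hm1 Hm2 HP1 HP2 HX1 HX2 HY2 HR4 HLMI1 HLMI2 HL1 HL2 HK1.
have [k1 [k2 [k1_gt0 k2_gt0 bound]]] := norm_le_of_qform_le Q_pd b_ge0.
exists (fun s t => k1 * s * expR (- (c / 2 * t))), (fun r => k2 * r).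
split; first by apply: classKL_exp; rewrite ?divr_gt0.
split; first exact: classK_scale.
move=> w x xh w_bd sol t t0; apply: bound; rewrite ?expR_ge0 ?sup_norm_ge0 //.
have -> : expR (- (c / 2 * t)) ^+ 2 = expR (- (c * t)).
  by rewrite -expRM_natl; congr expR; field.
exact: decay.
Qed.
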